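(* Assume the setting of the context with $K\ge2$ temperatures, and assume $\rho$ is not constant on $S^K$. Let $\lambda>0$ and $h(\mathbf{x})=\lambda\rho(\mathbf{x})$. Then the optimal cost \[ \gamma^*=\min_{\nu\in\mathcal{P}(S^K)}\Big\{J(\nu)+\sum_{\mathbf{x}\in S^K}h(\mathbf{x})\nu(\mathbf{x})\Big\} \] satisfies $\gamma^*<\lambda/K!$; in particular, for two temperatures, $\gamma^*<\lambda/2$.
   Context: **Dynamics.** $S$ is a finite set and $K\ge2$. For $k=1,\dots,K$, $\Gamma^k$ is an irreducible intensity matrix on $S$, reversible with respect to its unique invariant distribution $\mu_k$. Set $\mu=\mu_1\times\cdots\times\mu_K$. **Permutations and weights.** $\Sigma_K$ is the set of permutations of $\{1,\dots,K\}$, and $\mathbf{x}^\sigma=(x_{\sigma^{-1}(1)},\dots,x_{\sigma^{-1}(K)})$. Define $\rho(\mathbf{x})=\mu(\mathbf{x})/\sum_{\sigma}\mu(\mathbf{x}^\sigma)$. **Infinite swapping rates.** - $\Gamma^\infty$ is the rate matrix on $S^K$ with $\Gamma^\infty_{\mathbf{x},\mathbf{y}}=\sum_\sigma\rho(\mathbf{x}^\sigma)\Gamma^{\sigma(i)}_{x_i,y_i}$ when $\mathbf{y}$ differs from $\mathbf{x}$ exactly in coordinate $i$. For $K=2$: $\Gamma^\infty_{(x_1,x_2),(y_1,x_2)}=\rho(x_1,x_2)\Gamma^1_{x_1,y_1}+\rho(x_2,x_1)\Gamma^2_{x_1,y_1}$, and analogously for the second coordinate. - Off-diagonal rates between states differing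 in two or more coordinates are $0$. - $q^\infty(\mathbf{x})=\sum_{\mathbf{y}\ne\mathbf{x}}\Gamma^\infty_{\mathbf{x},\mathbf{y}}$ and $\bar\mu(\mathbf{x})=\frac1{K!}\sum_\sigma\mu(\mathbf{x}^\sigma)$. **Functional.** For $\nu\in\mathcal{P}(S^K)$ with $\theta=\nu/\bar\mu$, \[ J(\nu)=\sum_{\mathbf{x}}q^\infty(\mathbf{x})\theta(\mathbf{x})\bar\mu(\mathbf{x})-\sum_{\mathbf{x}\ne\mathbf{y}}\theta^{1/2}(\mathbf{x})\theta^{1/2}(\mathbf{y})\Gamma^\infty_{\mathbf{x},\mathbf{y}}\bar\mu(\mathbf{x}). \] *)

From HB Require Import structures.
From mathcomp Require Import all_boot all_order all_algebra all_fingroup.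
From mathcomp Require Import reals.
Set Implicit Arguments. Unset Strict Implicit. Unset Printing Implicit Defensive.
Import Order.TTheory GRing.Theory Num.Theory.
Local Open Scope ring_scope.

Section Defs.
Variables (R : realType) (S : finType) (K : nat).

Definition conf := {ffun 'I_K -> S}.

Definition intensity (G : S -> S -> R) : Prop :=
  (forall x y, x != y -> 0 <= G x y) /\ (forall x, \sum_(y : S) G x y = 0).

Definition irreducible (G : S -> S -> R) : Prop :=
  forall x y, connect (fun a b => (a != b) && (0 < G a b)) x y.

Definition is_distribution (m : S -> R) : Prop :=
  (forall x, 0 <= m x) /\ \sum_(x : S) m x = 1.

Definition is_invariant (G : S -> S -> R) (m : S -> R) : Prop :=
  forall y, \sum_(x : S) m x * G x y = 0.

Definition reversible (G : S -> S -> R) (m : S -> R) : Prop :=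
  forall x y, m x * G x y = m y * G y x.

Definition xperm (s : 'S_K) (x : conf) : conf := [ffun i => x (s^-1 i)%g].

Variables (mu_ : 'I_K -> S -> R) (Gam : 'I_K -> S -> S -> R).

Definition mu (x : conf) : R := \prod_(k < K) mu_ k (x k).

Definition rho (x : conf) : R := mu x / \sum_(s : 'S_K) mu (xperm s x).

(* Gamma^infty_{x,y}: nonzero only when y differs from x in exactly one
   coordinate i, in which case it equals sum_sigma rho(x^sigma) Gamma^{sigma(i)}_{x_i,y_i}.
   (The sum over i has at most one nonzero term.) *)
Definition Ginf (x y : conf) : R :=
  \sum_(i : 'I_K | (x i != y i) && [forall j, (j != i) ==> (x j == y j)])
     \sum_(s : 'S_K) rho (xperm s x) * Gam (s i) (x i) (y i).

Definition qinf (x : conf) : R := \sum_(y : conf | y != x) Ginf x y.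

Definition mubar (x : conf) : R := (K`!%:R)^-1 * \sum_(s : 'S_K) mu (xperm s x).

Definition is_prob (nu : conf -> R) : Prop :=
  (forall x, 0 <= nu x) /\ \sum_(x : conf) nu x = 1.

Definition J (nu : conf -> R) : R :=
  let theta x := nu x / mubar x in
  \sum_(x : conf) qinf x * theta x * mubar x
  - \sum_(x : conf) \sum_(y : conf | y != x)
       Num.sqrt (theta x) * Num.sqrt (theta y) * Ginf x y * mubar x.

End Defs.

From Pilot Require Import Defs.
From HB Require Import structures.
From mathcomp Require Import all_boot all_order all_algebra all_fingroup.
From mathcomp Require Import reals.
From mathcomp Require Import ring lra.
Import Order.TTheory GRing.Theory Num.Theory.
Local Open Scope ring_scope.
Set Implicit Arguments. Unset Strict Implicit. Unset Printing Implicit Defensive.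

(* Perturb the symmetrized measure mubar in the direction that lowers the
   cost: nu_e = mubar (1 + e (1/K! - rho)).  The linear cost drops by
   e lambda Var(rho) at first order, where Var is the (positive, since rho is
   not constant) variance of rho under mubar, whose mean is 1/K!.  By
   detailed balance J is a Dirichlet form in sqrt(theta), hence
   J(nu_e) = O(e^2); a small e therefore beats the cost lambda/K! of mubar. *)

Lemma mean_sub_sqrtM_le (R : rcfType) (a b : R) : 1/4 <= a -> 1/4 <= b ->
  (a + b) / 2 - Num.sqrt a * Num.sqrt b <= (a - b) ^+ 2 / 2.
Proof.
move=> ha hb.
have [a0 b0] : 0 <= a /\ 0 <= b by split; lra.
set u := Num.sqrt a; set v := Num.sqrt b.
have ua : u ^+ 2 = a by rewrite sqr_sqrtr.
have vb : v ^+ 2 = b by rewrite sqr_sqrtr.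
have [u0 v0] : 0 <= u /\ 0 <= v by rewrite !sqrtr_ge0.
rewrite -ua -vb in ha hb *.
have [hu hv] : 1/2 <= u /\ 1/2 <= v by split; nra.
(* (a + b)/2 - uv = (u - v)^2/2, and (a - b)^2 = (u - v)^2 (u + v)^2 *)
have : 0 <= (u - v) ^+ 2 * ((u + v) ^+ 2 - 1) by rewrite mulr_ge0 ?sqr_ge0 //; nra.
nra.
Qed.

Lemma dirichlet_sqrt_le (R : rcfType) (T : finType) (G : T -> T -> R)
    (m th : T -> R) :
  (forall x, 0 < m x) -> (forall x y, m x * G x y = m y * G y x) ->
  (forall x y, x != y -> 0 <= G x y) -> (forall x, 1/4 <= th x) ->
  \sum_x (\sum_(y | y != x) G x y) * th x * m x
  - \sum_x \sum_(y | y != x) Num.sqrt (th x) * Num.sqrt (th y) * G x y * m x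
  <= \sum_x \sum_(y | y != x) (th x - th y) ^+ 2 / 2 * (G x y * m x).
Proof.
move=> m_gt0 m_rev G_ge0 th_ge.
set S1 := \sum_x (\sum_(y | y != x) G x y) * th x * m x.
have S1_src : S1 = \sum_x \sum_(y | y != x) th x * (G x y * m x).
  by apply: eq_bigr => x _; rewrite !mulr_suml; apply: eq_bigr => y _; ring.
have S1_dst : S1 = \sum_x \sum_(y | y != x) th y * (G x y * m x).
  rewrite S1_src (exchange_big_dep xpredT) //=; apply: eq_bigr => y _.
  rewrite (eq_bigl (fun x => x != y)) => [|x]; last by rewrite eq_sym.
  by apply: eq_bigr => x _; rewrite [G x y * _]mulrC m_rev [m y * _]mulrC.
have -> : S1 = (S1 + S1) / 2 by field.
rewrite {1}S1_src S1_dst -big_split /= mulr_suml -sumrB; apply: ler_sum => x _.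
rewrite -big_split /= mulr_suml -sumrB; apply: ler_sum => y yx.
have w_ge0 : 0 <= G x y * m x by rewrite mulr_ge0 ?G_ge0 1?eq_sym // ltW.
apply: le_trans _ (ler_wpM2r w_ge0 (mean_sub_sqrtM_le (th_ge x) (th_ge y))).
by rewrite le_eqVlt; apply/orP; left; apply/eqP; ring.
Qed.

Lemma xpermM (S : finType) (K : nat) (s t : 'S_K) (x : conf S K) :
  xperm t (xperm s x) = xperm (s * t)%g x.
Proof. by apply/ffunP => i; rewrite !ffunE invMg permM. Qed.

Lemma xperm1 (S : finType) (K : nat) (x : conf S K) : xperm 1%g x = x.
Proof. by apply/ffunP => i; rewrite !ffunE invg1 perm1. Qed.

Lemma xperm_inj (S : finType) (K : nat) (s : 'S_K) : injective (@xperm S K s).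
Proof.
by move=> x y exy; rewrite -(xperm1 x) -(xperm1 y) -(mulgV s) -!xpermM exy.
Qed.

Lemma distribution_gt0 (R : realType) (S : finType) (G : S -> S -> R)
    (m : S -> R) :
  irreducible G -> is_distribution m -> reversible G m -> forall x, 0 < m x.
Proof.
move=> irr [m_ge0 m_sum1] m_rev x.
have [y my_gt0] : exists y, 0 < m y.
  case: (pickP (fun y => 0 < m y)) => [y ?|m_le0]; first by exists y.
  have m0 z : m z = 0 by apply/eqP; rewrite eq_le m_ge0 andbT leNgt m_le0.
  by move: m_sum1; rewrite big1 // => /eqP; rewrite eq_sym oner_eq0.
(* positivity propagates along every positive-rate edge y -> z by reversibility *)
case/connectP: (irr y x) => p + -> {x}.
elim: p y my_gt0 => [|z p IH] y my_gt0 //= /andP[/andP[_ Gyz] pz].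
apply: IH pz; have : 0 < m z * G z y by rewrite -m_rev mulr_gt0.
by have := m_ge0 z; rewrite le0r => /orP[/eqP->|//]; rewrite mul0r ltxx.
Qed.

Section SwappingModel.
Variables (R : realType) (S : finType) (K : nat) (mu_ : 'I_K -> S -> R)
  (Gam : 'I_K -> S -> S -> R).
Hypothesis marginals_gt0 : forall k y, 0 < mu_ k y.
Hypothesis marginals_distr : forall k, is_distribution (mu_ k).
Hypothesis Gam_intensity : forall k, intensity (Gam k).
Hypothesis Gam_rev : forall k, reversible (Gam k) (mu_ k).

Local Notation conf := (conf S K).
Local Notation mu := (mu mu_).
Local Notation rho := (rho mu_).
Local Notation mubar := (mubar mu_).
Local Notation Ginf := (Ginf mu_ Gam).
Local Notation Z x := (\sum_(s : 'S_K) mu (xperm s x)).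
Local Notation kinv := (K`!%:R^-1 : R).

Lemma mu_xperm (s : 'S_K) (x : conf) :
  mu (xperm s x) = \prod_j mu_ (s j) (x j).
Proof.
rewrite /Defs.mu (reindex_inj (@perm_inj _ s)).
by apply: eq_bigr => j _; rewrite ffunE permK.
Qed.

Lemma sum_mu_xpermE (s : 'S_K) (x : conf) : Z (xperm s x) = Z x.
Proof.
under eq_bigr do rewrite xpermM.
by rewrite [RHS](reindex_inj (mulgI s)).
Qed.

Lemma mu_gt0 (x : conf) : 0 < mu x.
Proof. exact: prodr_gt0. Qed.

Lemma mu_le_sum_xperm (x : conf) : mu x <= Z x.
Proof.
rewrite (bigD1 1%g) //= xperm1 lerDl.
by apply: sumr_ge0 => s _; apply/ltW/mu_gt0.
Qed.

Lemma sum_xperm_gt0 (x : conf) : 0 < Z x.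
Proof. exact: lt_le_trans (mu_gt0 x) (mu_le_sum_xperm x). Qed.

Lemma mubar_gt0 (x : conf) : 0 < mubar x.
Proof. by rewrite mulr_gt0 ?sum_xperm_gt0 // invr_gt0 ltr0n fact_gt0. Qed.

Lemma mubar_rho_xperm (s : 'S_K) (x : conf) :
  mubar x * rho (xperm s x) = kinv * mu (xperm s x).
Proof.
rewrite /mubar /Defs.rho sum_mu_xpermE -mulrA; congr (_ * _).
by rewrite mulrC -mulrA mulVf ?mulr1 // gt_eqF ?sum_xperm_gt0.
Qed.

Lemma rho_mubar (x : conf) : rho x * mubar x = kinv * mu x.
Proof. by have := mubar_rho_xperm 1%g x; rewrite xperm1 mulrC. Qed.

Lemma rho_ge0 (x : conf) : 0 <= rho x.
Proof. by rewrite divr_ge0 // ltW ?mu_gt0 ?sum_xperm_gt0. Qed.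

Lemma rho_le1 (x : conf) : rho x <= 1.
Proof. by rewrite ler_pdivrMr ?mul1r ?mu_le_sum_xperm ?sum_xperm_gt0. Qed.

Lemma Ginf_ge0 (x y : conf) : 0 <= Ginf x y.
Proof.
apply: sumr_ge0 => i /andP[xy_i _].
by apply: sumr_ge0 => s _; rewrite mulr_ge0 ?rho_ge0 //; case: (Gam_intensity (s i)) => ->.
Qed.

Lemma mubar_Ginf_sym (x y : conf) : mubar x * Ginf x y = mubar y * Ginf y x.
Proof.
rewrite /Defs.Ginf !mulr_sumr.
apply: eq_big => [i|i /andP[_ /forallP xy_off_i]].
  by rewrite eq_sym; congr andb; apply: eq_forallb => j; rewrite [x j == _]eq_sym.
rewrite !mulr_sumr; apply: eq_bigr => s _.
rewrite mulrA [in RHS]mulrA !mubar_rho_xperm !mu_xperm (bigD1 i) // [in RHS](bigD1 i) //=.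
rewrite (eq_bigr (fun j => mu_ (s j) (y j))) => [|j ji]; last first.
  by rewrite (eqP (implyP (xy_off_i j) ji)).
transitivity (kinv * \prod_(j | j != i) mu_ (s j) (y j)
              * (mu_ (s i) (x i) * Gam (s i) (x i) (y i))); first by ring.
by rewrite Gam_rev; ring.
Qed.

Lemma sum_mu : \sum_(x : conf) mu x = 1.
Proof.
rewrite /Defs.mu -bigA_distr_bigA /=.
by apply: big1 => k _; case: (marginals_distr k).
Qed.

Lemma sum_mubar : \sum_(x : conf) mubar x = 1.
Proof.
rewrite /mubar -mulr_sumr exchange_big /=.
rewrite (eq_bigr (fun _ => 1)) => [|s _]; last first.
  by rewrite -[RHS]sum_mu [RHS](reindex_inj (@xperm_inj S K s)).
by rewrite sumr_const card_Sn mulVf // pnatr_eq0 -lt0n fact_gt0.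
Qed.

Lemma sum_rho_mubar : \sum_(x : conf) rho x * mubar x = kinv.
Proof.
under eq_bigr do rewrite rho_mubar.
by rewrite -mulr_sumr sum_mu mulr1.
Qed.

Definition rho_variance : R := \sum_(x : conf) (rho x - kinv) ^+ 2 * mubar x.

Definition rho_energy : R :=
  \sum_(x : conf) \sum_(y | y != x) (rho x - rho y) ^+ 2 / 2 * (Ginf x y * mubar x).

Definition perturbation (e : R) (x : conf) : R := 1 + e * (kinv - rho x).

Definition perturbed_mubar (e : R) (x : conf) : R := mubar x * perturbation e x.

Lemma rho_variance_gt0 : (exists x y : conf, rho x != rho y) -> 0 < rho_variance.
Proof.
case=> x1 [x2 rho12].
have terms_ge0 (x : conf) : 0 <= (rho x - kinv) ^+ 2 * mubar x.
  by rewrite mulr_ge0 ?sqr_ge0 // ltW ?mubar_gt0.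
rewrite lt0r sumr_ge0 // andbT; apply: contra rho12 => /eqP var0.
have rhoE (x : conf) : rho x = kinv.
  have /eqP := psumr_eq0P (fun x _ => terms_ge0 x) var0 (i := x) isT.
  by rewrite mulf_eq0 (gt_eqF (mubar_gt0 x)) orbF sqrf_eq0 subr_eq0 => /eqP.
by rewrite !rhoE.
Qed.

Lemma rho_energy_ge0 : 0 <= rho_energy.
Proof.
rewrite /rho_energy; apply: sumr_ge0 => x _; apply: sumr_ge0 => y _.
apply: mulr_ge0; first by rewrite divr_ge0 ?sqr_ge0.
by rewrite mulr_ge0 ?Ginf_ge0 ?(ltW (mubar_gt0 x)).
Qed.

Lemma perturbation_ge (e : R) (x : conf) : 0 <= e <= 1/2 -> 1/4 <= perturbation e x.
Proof.
have fact_gt0R : 0 < K`!%:R :> R by rewrite ltr0n fact_gt0.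
have kinv_gt0 : 0 < kinv by rewrite invr_gt0.
have kinv_le1 : kinv <= 1 by rewrite invf_le1 // ler1n fact_gt0.
rewrite /perturbation; have := rho_ge0 x; have := rho_le1 x.
move=> ? ? /andP[? ?]; nra.
Qed.

Lemma perturbed_mubar_prob (e : R) : 0 <= e <= 1/2 -> is_prob (perturbed_mubar e).
Proof.
move=> e_small; split=> [x|].
  by rewrite mulr_ge0 ?ltW ?mubar_gt0 //; have := perturbation_ge x e_small; lra.
transitivity (\sum_x mubar x + e * kinv * \sum_x mubar x
              - e * \sum_x rho x * mubar x).
  rewrite !mulr_sumr -big_split -sumrB /=; apply: eq_bigr => x _.
  by rewrite /perturbed_mubar /perturbation; ring.
by rewrite sum_mubar sum_rho_mubar; ring.
Qed.

Lemma J_perturbed_mubar_le (e : R) :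
  0 <= e <= 1/2 -> J mu_ Gam (perturbed_mubar e) <= e ^+ 2 * rho_energy.
Proof.
move=> e_small.
have thetaE (x : conf) : perturbed_mubar e x / mubar x = perturbation e x.
  by rewrite /perturbed_mubar mulrC mulKf // gt_eqF ?mubar_gt0.
rewrite /J /qinf; under eq_bigr do rewrite thetaE.
under [X in _ - X]eq_bigr do under eq_bigr do rewrite !thetaE.
apply: le_trans (dirichlet_sqrt_le _ _ _ _) _.
- exact: mubar_gt0.
- by move=> x y; rewrite mubar_Ginf_sym.
- by move=> x y _; apply: Ginf_ge0.
- by move=> x; apply: perturbation_ge.
rewrite /rho_energy mulr_sumr le_eqVlt; apply/orP; left; apply/eqP.
by apply: eq_bigr => x _; rewrite mulr_sumr; apply: eq_bigr => y _; rewrite /perturbation; ring.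
Qed.

Lemma cost_perturbed_mubar (lambda e : R) :
  \sum_(x : conf) (lambda * rho x) * perturbed_mubar e x
    = lambda * kinv - e * lambda * rho_variance.
Proof.
transitivity (lambda * \sum_x rho x * mubar x + lambda * e * kinv ^+ 2 * \sum_x mubar x
    - lambda * e * kinv * \sum_x rho x * mubar x - lambda * e * rho_variance).
  rewrite /rho_variance !mulr_sumr -!big_split -!sumrB /=; apply: eq_bigr => x _.
  by rewrite /perturbed_mubar /perturbation; ring.
by rewrite sum_mubar sum_rho_mubar; ring.
Qed.

End SwappingModel.

Lemma small_quadratic_gain (R : realFieldType) (A P : R) : 0 <= A -> 0 < P ->
  exists2 e, 0 < e <= 1/2 & e * A < P.
Proof.
move=> A_ge0 P_gt0; exists (P / (2 * (A + 1) + 2 * P)).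
  have Q_gt0 : 0 < 2 * (A + 1) + 2 * P by lra.
  rewrite divr_gt0 //= ler_pdivrMr //; lra.
rewrite mulrAC ltr_pdivrMr; nra.
Qed.

Theorem lemmaA2 (R : realType) (S : finType) (K : nat) (hK : (2 <= K)%N)
  (Gam : 'I_K -> S -> S -> R) (mu_ : 'I_K -> S -> R)
  (hGi : forall k, intensity (Gam k))
  (hGirr : forall k, irreducible (Gam k))
  (hmud : forall k, is_distribution (mu_ k))
  (hmuinv : forall k, is_invariant (Gam k) (mu_ k))
  (hmuuniq : forall k (m : S -> R),
      is_distribution m -> is_invariant (Gam k) m -> m = mu_ k)
  (hrev : forall k, reversible (Gam k) (mu_ k))
  (hrho : exists x y : conf S K, rho mu_ x != rho mu_ y)
  (lambda : R) (hlam : 0 < lambda) :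
  exists nu : conf S K -> R, is_prob nu /\
    J mu_ Gam nu + \sum_(x : conf S K) (lambda * rho mu_ x) * nu x
      < lambda / (K`!)%:R.
Proof.
have marginals_gt0 k : forall y, 0 < mu_ k y by apply: distribution_gt0.
have var_gt0 := rho_variance_gt0 marginals_gt0 hrho.
have energy_ge0 := rho_energy_ge0 marginals_gt0 hGi.
have [e /andP[e_gt0 e_le] gain] :=
  small_quadratic_gain energy_ge0 (mulr_gt0 hlam var_gt0).
have e_small : 0 <= e <= 1/2 by rewrite ltW.
exists (perturbed_mubar mu_ e); split; first exact: perturbed_mubar_prob.
have J_le := J_perturbed_mubar_le marginals_gt0 hGi hrev e_small.
have : e ^+ 2 * rho_energy mu_ Gam < e * lambda * rho_variance mu_.
  by rewrite expr2 -!mulrA ltr_pM2l.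
rewrite (cost_perturbed_mubar marginals_gt0 hmud); lra.
Qed.
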